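(* Consider the simplified community network described below with $\gamma>1$. Its equilibrium points (points $\beta=(\beta_a,\beta_b)\in[0,1]^2$ with $F(\beta)=\beta$) are $\mathbf 0=(0,0)$, $\mathbf 1=(1,1)$, and, when $\max\{p_1/p_2,\,p_2/p_1\}<\gamma$, the interior point $\beta^*=(\beta_a^*,\beta_b^* )$ with $$\beta_a^*=\frac{\gamma\big((\gamma+1)p_1p_2-2p_2+\sqrt{p_1p_2}\,\Delta\big)}{(\gamma-1)\big((\gamma+1)p_1p_2+\sqrt{p_1p_2}\,\Delta\big)},\qquad \beta_b^*=\frac{2\gamma p_1-(\gamma+1)p_1p_2-\sqrt{p_1p_2}\,\Delta}{(\gamma-1)\big((\gamma+1)p_1p_2+\sqrt{p_1p_2}\,\Delta\big)},$$ where $\Delta=\sqrt{4\gamma(1-p_1-p_2)+(\gamma+1)^2p_1p_2}$.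
   Context: The simplified community network has two agents $a,b$ with normalized adjacency (transition) matrix $W=\begin{pmatrix}p_1&1-p_1\\1-p_2&p_2\end{pmatrix}$, $p_1,p_2\in[0,1)$ not both zero; equivalently the symmetric weights are $a_{a,a}=p_1(1-p_2)$, $a_{a,b}=a_{b,a}=(1-p_1)(1-p_2)$, $a_{b,b}=p_2(1-p_1)$. Agent $a$ has bias parameter $\gamma_a=\gamma>1$ and agent $b$ has bias parameter $\gamma_b=1/\gamma$. With $f(\mu,\gamma)=\frac{\gamma\mu}{1+(\gamma-1)\mu}$, $\mu_a=p_1\beta_a+(1-p_1)\beta_b$, $\mu_b=(1-p_2)\beta_a+p_2\beta_b$, the map $F$ is $F(\beta_a,\beta_b)=(f(\mu_a,\gamma),f(\mu_b,1/\gamma))$. The condition $\max\{p_1/p_2,p_2/p_1\}<\gamma$ is understood to fail if $p_1=0$ or $p_2=0$. *)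

From Stdlib Require Import Reals.
Open Scope R_scope.

Definition f (mu gamma : R) : R := gamma * mu / (1 + (gamma - 1) * mu).

(* The map F of the simplified two-agent community network:
   agent a has bias gamma, agent b has bias 1/gamma. *)
Definition F (p1 p2 gamma : R) (beta : R * R) : R * R :=
  let mu_a := p1 * fst beta + (1 - p1) * snd beta in
  let mu_b := (1 - p2) * fst beta + p2 * snd beta in
  (f mu_a gamma, f mu_b (/ gamma)).

Definition Delta (p1 p2 gamma : R) : R :=
  sqrt (4 * gamma * (1 - p1 - p2) + (gamma + 1) ^ 2 * p1 * p2).

Definition beta_star_a (p1 p2 gamma : R) : R :=
  gamma * ((gamma + 1) * p1 * p2 - 2 * p2 + sqrt (p1 * p2) * Delta p1 p2 gamma)
  / ((gamma - 1) * ((gamma + 1) * p1 * p2 + sqrt (p1 * p2) * Delta p1 p2 gamma)).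

Definition beta_star_b (p1 p2 gamma : R) : R :=
  (2 * gamma * p1 - (gamma + 1) * p1 * p2 - sqrt (p1 * p2) * Delta p1 p2 gamma)
  / ((gamma - 1) * ((gamma + 1) * p1 * p2 + sqrt (p1 * p2) * Delta p1 p2 gamma)).

(* max{p1/p2, p2/p1} < gamma, understood to fail if p1 = 0 or p2 = 0 *)
Definition interior_cond (p1 p2 gamma : R) : Prop :=
  0 < p1 /\ 0 < p2 /\ Rmax (p1 / p2) (p2 / p1) < gamma.

Definition in_unit_square (beta : R * R) : Prop :=
  0 <= fst beta <= 1 /\ 0 <= snd beta <= 1.

(* Write [a = gamma - (gamma - 1) beta_a] and [b = 1 + (gamma - 1) beta_b], both in
   [1, gamma].  The fixed-point equations read [mu_a a = beta_a] and [mu_b b = gamma beta_b],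
   and the sum of their residuals is [(beta_a - beta_b) (p1 a - p2 b)].  On the diagonal
   only [0] and [1] survive.  Off the diagonal [p1 a = p2 b], which together with
   [a, b] in [1, gamma] forces [p1, p2 > 0] and [p2 / gamma < p1 < gamma p2].  Setting
   [a = 2 gamma p2 / K], [b = 2 gamma p1 / K] turns both equations into the single quadratic
   [resolvent K = 0], with roots [(gamma + 1) p1 p2 -+ sqrt (p1 p2) Delta].  Since
   [a <= gamma] gives [K >= 2 p2] and the quadratic is negative at [2 p2], [K] is the
   larger root, which gives [beta*]. *)

From Stdlib Require Import Reals Psatz.
(* [Defs] is imported after [Reals] so that its [Delta] shadows the one of [Reals]. *)
From Pilot Require Import Defs.
Open Scope R_scope.

Definition fixed_point_eqs (p1 p2 g : R) (beta : R * R) : Prop :=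
  let '(x, y) := beta in
  (p1 * x + (1 - p1) * y) * (g - (g - 1) * x) = x /\
  ((1 - p2) * x + p2 * y) * (1 + (g - 1) * y) = g * y.

Definition resolvent (p1 p2 g K : R) : R :=
  K ^ 2 - 2 * (g + 1) * p1 * p2 * K + 4 * g * p1 * p2 * (p1 + p2 - 1).

Definition K_plus (p1 p2 g : R) : R :=
  (g + 1) * p1 * p2 + sqrt (p1 * p2) * Delta p1 p2 g.

Definition K_minus (p1 p2 g : R) : R :=
  (g + 1) * p1 * p2 - sqrt (p1 * p2) * Delta p1 p2 g.

Definition point_of_K (p1 p2 g K : R) : R * R :=
  (g * (K - 2 * p2) / ((g - 1) * K), (2 * g * p1 - K) / ((g - 1) * K)).

Lemma f_fixed_iff (m g x : R) :
  0 < g -> 0 <= m <= 1 -> f m g = x <-> m * (g - (g - 1) * x) = x.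
Proof.
  intros Hg Hm. unfold f.
  assert (Hden : 0 < 1 + (g - 1) * m) by nra.
  split; intro H.
  - subst x. field. lra.
  - assert (E : g * m = x * (1 + (g - 1) * m)) by lra.
    rewrite E. field. lra.
Qed.

Lemma f_inv_fixed_iff (m g y : R) :
  0 < g -> 0 <= m <= 1 -> f m (/ g) = y <-> m * (1 + (g - 1) * y) = g * y.
Proof.
  intros Hg Hm. rewrite f_fixed_iff by (auto using Rinv_0_lt_compat).
  replace (m * (/ g - (/ g - 1) * y)) with (m * (1 + (g - 1) * y) / g) by (field; lra).
  set (u := m * (1 + (g - 1) * y)).
  split; intro H.
  - rewrite <- H. field. lra.
  - rewrite H. field. lra.
Qed.

Lemma F_fixed_iff (p1 p2 g : R) (beta : R * R) :
  0 <= p1 <= 1 -> 0 <= p2 <= 1 -> 0 < g -> in_unit_square beta ->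
  F p1 p2 g beta = beta <-> fixed_point_eqs p1 p2 g beta.
Proof.
  destruct beta as [x y]. intros Hp1 Hp2 Hg [Hx Hy]. simpl in Hx, Hy.
  unfold F, fixed_point_eqs. simpl.
  rewrite pair_equal_spec, f_fixed_iff, f_inv_fixed_iff by (auto; nra).
  reflexivity.
Qed.

Lemma fixed_point_residuals (p1 p2 g x y : R) :
  ((p1 * x + (1 - p1) * y) * (g - (g - 1) * x) - x) +
  (((1 - p2) * x + p2 * y) * (1 + (g - 1) * y) - g * y)
  = (x - y) * (p1 * (g - (g - 1) * x) - p2 * (1 + (g - 1) * y)).
Proof. ring. Qed.

Lemma fixed_point_eqs_diag (p1 p2 g x : R) :
  g <> 1 -> fixed_point_eqs p1 p2 g (x, x) -> x = 0 \/ x = 1.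
Proof.
  intros Hg [Ea _].
  assert (E : (g - 1) * (x * (1 - x)) = 0) by lra.
  destruct (Rmult_integral _ _ E) as [|E']; [lra|].
  destruct (Rmult_integral _ _ E'); lra.
Qed.

Lemma fixed_point_eqs_off_diag (p1 p2 g x y : R) :
  x <> y -> fixed_point_eqs p1 p2 g (x, y) ->
  p1 * (g - (g - 1) * x) = p2 * (1 + (g - 1) * y).
Proof.
  intros Hxy [Ea Eb].
  assert (E : (x - y) * (p1 * (g - (g - 1) * x) - p2 * (1 + (g - 1) * y)) = 0)
    by (rewrite <- fixed_point_residuals; lra).
  destruct (Rmult_integral _ _ E); lra.
Qed.

Lemma Delta_arg_ge0 (p1 p2 g : R) :
  0 <= p1 <= 1 -> 0 <= p2 <= 1 -> 0 <= g ->
  0 <= 4 * g * (1 - p1 - p2) + (g + 1) ^ 2 * p1 * p2.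
Proof.
  intros Hp1 Hp2 Hg.
  (* the argument equals [4 g (1 - p1) (1 - p2) + (g - 1)^2 p1 p2] *)
  assert (0 <= 4 * g * ((1 - p1) * (1 - p2))) by (apply Rmult_le_pos; nra).
  assert (0 <= (g - 1) ^ 2 * (p1 * p2)) by (apply Rmult_le_pos; [apply pow2_ge_0 | nra]).
  lra.
Qed.

Lemma resolvent_factor (p1 p2 g K : R) :
  0 <= p1 <= 1 -> 0 <= p2 <= 1 -> 0 <= g ->
  resolvent p1 p2 g K = (K - K_minus p1 p2 g) * (K - K_plus p1 p2 g).
Proof.
  intros Hp1 Hp2 Hg.
  assert (Hsq : (sqrt (p1 * p2) * Delta p1 p2 g) ^ 2
                = p1 * p2 * (4 * g * (1 - p1 - p2) + (g + 1) ^ 2 * p1 * p2)).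
  { unfold Delta. rewrite Rpow_mult_distr, !pow2_sqrt; [reflexivity | |].
    - now apply Delta_arg_ge0.
    - nra. }
  unfold resolvent, K_minus, K_plus. nra.
Qed.

Lemma K_minus_le_K_plus (p1 p2 g : R) : K_minus p1 p2 g <= K_plus p1 p2 g.
Proof.
  unfold K_minus, K_plus.
  assert (0 <= sqrt (p1 * p2) * Delta p1 p2 g)
    by (apply Rmult_le_pos; [apply sqrt_pos | apply sqrt_pos]).
  lra.
Qed.

Lemma resolvent_at_2p (p1 p2 g : R) :
  resolvent p1 p2 g (2 * p2) = 4 * p2 * (1 - p1) * (p2 - g * p1).
Proof. unfold resolvent. ring. Qed.

Lemma resolvent_at_2gp (p1 p2 g : R) :
  resolvent p1 p2 g (2 * g * p2) = 4 * g * p2 * (1 - p1) * (g * p2 - p1).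
Proof. unfold resolvent. ring. Qed.

Lemma K_plus_sym (p1 p2 g : R) : K_plus p1 p2 g = K_plus p2 p1 g.
Proof.
  unfold K_plus, Delta.
  replace (1 - p2 - p1) with (1 - p1 - p2) by ring.
  replace ((g + 1) ^ 2 * p2 * p1) with ((g + 1) ^ 2 * p1 * p2) by ring.
  rewrite (Rmult_comm p2 p1). ring.
Qed.

Lemma between_roots (r s u : R) : r <= s -> (u - r) * (u - s) < 0 -> r < u < s.
Proof. intros. nra. Qed.

Lemma above_roots (r s v : R) : r < v -> 0 < (v - r) * (v - s) -> s < v.
Proof. intros. nra. Qed.

Lemma K_minus_lt_2p2_lt_K_plus (p1 p2 g : R) :
  0 <= p1 < 1 -> 0 < p2 <= 1 -> 1 < g -> p2 < g * p1 ->
  K_minus p1 p2 g < 2 * p2 < K_plus p1 p2 g.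
Proof.
  intros Hp1 Hp2 Hg H21.
  apply between_roots; [apply K_minus_le_K_plus |].
  rewrite <- resolvent_factor, resolvent_at_2p by lra.
  assert (0 < 4 * p2 * (1 - p1)) by nra.
  nra.
Qed.

Lemma K_plus_lt_2gp2 (p1 p2 g : R) :
  0 <= p1 < 1 -> 0 < p2 <= 1 -> 1 < g -> p1 < g * p2 -> p2 < g * p1 ->
  K_plus p1 p2 g < 2 * g * p2.
Proof.
  intros Hp1 Hp2 Hg H12 H21.
  pose proof (K_minus_lt_2p2_lt_K_plus p1 p2 g Hp1 Hp2 Hg H21).
  apply (above_roots (K_minus p1 p2 g)); [nra |].
  rewrite <- resolvent_factor, resolvent_at_2gp by lra.
  assert (0 < 4 * g * p2 * (1 - p1)) by (repeat apply Rmult_lt_0_compat; lra).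
  nra.
Qed.

Lemma K_plus_bounds (p1 p2 g : R) :
  0 < p1 < 1 -> 0 < p2 < 1 -> 1 < g -> p1 < g * p2 -> p2 < g * p1 ->
  2 * p2 < K_plus p1 p2 g < 2 * g * p2 /\ 2 * p1 < K_plus p1 p2 g < 2 * g * p1.
Proof.
  intros Hp1 Hp2 Hg H12 H21.
  pose proof (K_minus_lt_2p2_lt_K_plus p1 p2 g ltac:(lra) ltac:(lra) Hg H21).
  pose proof (K_minus_lt_2p2_lt_K_plus p2 p1 g ltac:(lra) ltac:(lra) Hg H12).
  pose proof (K_plus_lt_2gp2 p1 p2 g ltac:(lra) ltac:(lra) Hg H12 H21).
  pose proof (K_plus_lt_2gp2 p2 p1 g ltac:(lra) ltac:(lra) Hg H21 H12).
  rewrite (K_plus_sym p2 p1) in *. lra.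
Qed.

Lemma resolvent_root_unique (p1 p2 g K : R) :
  0 <= p1 < 1 -> 0 < p2 <= 1 -> 1 < g -> p2 < g * p1 ->
  2 * p2 <= K -> resolvent p1 p2 g K = 0 -> K = K_plus p1 p2 g.
Proof.
  intros Hp1 Hp2 Hg H21 HK E. rewrite resolvent_factor in E by lra.
  pose proof (K_minus_lt_2p2_lt_K_plus p1 p2 g Hp1 Hp2 Hg H21).
  destruct (Rmult_integral _ _ E); lra.
Qed.

Lemma point_of_K_fixed_iff (p1 p2 g K : R) :
  1 < g -> 0 < K ->
  fixed_point_eqs p1 p2 g (point_of_K p1 p2 g K) <-> resolvent p1 p2 g K = 0.
Proof.
  intros Hg HK. unfold fixed_point_eqs, point_of_K.
  set (x := g * (K - 2 * p2) / ((g - 1) * K)).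
  set (y := (2 * g * p1 - K) / ((g - 1) * K)).
  assert (Ea : (g - 1) * K ^ 2 * ((p1 * x + (1 - p1) * y) * (g - (g - 1) * x) - x)
               = - g * resolvent p1 p2 g K)
    by (unfold x, y, resolvent; field; lra).
  assert (Eb : (g - 1) * K ^ 2 * (((1 - p2) * x + p2 * y) * (1 + (g - 1) * y) - g * y)
               = g * resolvent p1 p2 g K)
    by (unfold x, y, resolvent; field; lra).
  assert (0 < (g - 1) * K ^ 2) by (apply Rmult_lt_0_compat; nra).
  split.
  - intros [_ Eb0]. rewrite Eb0, Rminus_diag, Rmult_0_r in Eb. nra.
  - intro E. rewrite E in Ea, Eb. split; nra.
Qed.

Lemma point_of_K_in_open_square (p1 p2 g K : R) :
  1 < g -> 2 * p2 < K < 2 * g * p2 -> 2 * p1 < K < 2 * g * p1 ->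
  0 < fst (point_of_K p1 p2 g K) < 1 /\ 0 < snd (point_of_K p1 p2 g K) < 1.
Proof.
  intros Hg HK2 HK1. simpl.
  assert (HK : 0 < K) by nra.
  assert (Hd : 0 < (g - 1) * K) by (apply Rmult_lt_0_compat; lra).
  split; split.
  - apply Rdiv_lt_0_compat; [apply Rmult_lt_0_compat |]; lra.
  - apply Rlt_0_minus.
    replace (1 - _) with ((2 * g * p2 - K) / ((g - 1) * K)) by (field; lra).
    apply Rdiv_lt_0_compat; lra.
  - apply Rdiv_lt_0_compat; lra.
  - apply Rlt_0_minus.
    replace (1 - _) with (g * (K - 2 * p1) / ((g - 1) * K)) by (field; lra).
    apply Rdiv_lt_0_compat; [apply Rmult_lt_0_compat |]; lra.
Qed.

Lemma div_lt_iff (a b c : R) : 0 < b -> a / b < c <-> a < c * b.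
Proof.
  intro Hb. assert (E : a / b * b = a) by (field; lra).
  split; intro H; nra.
Qed.

Lemma interior_cond_iff (p1 p2 g : R) :
  interior_cond p1 p2 g <-> 0 < p1 /\ 0 < p2 /\ p1 < g * p2 /\ p2 < g * p1.
Proof.
  unfold interior_cond. split.
  - intros (H1 & H2 & H). rewrite Rmax_Rlt, !div_lt_iff in H by lra. lra.
  - intros (H1 & H2 & H). rewrite Rmax_Rlt, !div_lt_iff by lra. lra.
Qed.

Lemma balance_interior (p1 p2 g x y : R) :
  0 <= p1 -> 0 <= p2 -> ~ (p1 = 0 /\ p2 = 0) -> 1 < g ->
  0 <= x <= 1 -> 0 <= y <= 1 -> x <> y ->
  p1 * (g - (g - 1) * x) = p2 * (1 + (g - 1) * y) ->
  0 < p1 /\ 0 < p2 /\ p1 < g * p2 /\ p2 < g * p1.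
Proof.
  intros Hp1 Hp2 Hp Hg Hx Hy Hxy Hbal.
  assert (1 <= g - (g - 1) * x) by nra.
  assert (1 <= 1 + (g - 1) * y) by nra.
  assert (0 < p1).
  { destruct (Rle_lt_or_eq_dec 0 p1 Hp1) as [| <-]; [assumption | exfalso].
    apply Hp. split; nra. }
  assert (0 < p2).
  { destruct (Rle_lt_or_eq_dec 0 p2 Hp2) as [| <-]; [assumption | exfalso].
    apply Hp. split; nra. }
  assert (g * p1 - p2 = (g - 1) * (p1 * x + p2 * y)) by lra.
  assert (g * p2 - p1 = (g - 1) * (p1 * (1 - x) + p2 * (1 - y))) by lra.
  assert (0 < p1 * x + p2 * y) by (destruct (Rlt_or_le 0 x); nra).
  assert (0 < p1 * (1 - x) + p2 * (1 - y)) by (destruct (Rlt_or_le x 1); nra).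
  repeat split; nra.
Qed.

Lemma balance_point_of_K (p1 p2 g x y : R) :
  0 < p2 -> 1 < g -> 0 <= x <= 1 ->
  p1 * (g - (g - 1) * x) = p2 * (1 + (g - 1) * y) ->
  exists K, 2 * p2 <= K /\ (x, y) = point_of_K p1 p2 g K.
Proof.
  intros Hp2 Hg Hx Hbal.
  assert (Ha : 1 <= g - (g - 1) * x <= g) by nra.
  exists (2 * g * p2 / (g - (g - 1) * x)). split.
  - apply Rmult_le_reg_r with (g - (g - 1) * x); [lra |].
    field_simplify; nra.
  - unfold point_of_K. f_equal.
    + field. nra.
    + transitivity ((p1 * (g - (g - 1) * x) / p2 - 1) / (g - 1)).
      * rewrite Hbal. field. lra.
      * field. repeat split; lra.
Qed.

Lemma beta_star_eq (p1 p2 g : R) :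
  (beta_star_a p1 p2 g, beta_star_b p1 p2 g) = point_of_K p1 p2 g (K_plus p1 p2 g).
Proof.
  unfold beta_star_a, beta_star_b, point_of_K, K_plus. f_equal; f_equal; ring.
Qed.

Lemma beta_star_in_open_square (p1 p2 g : R) :
  p1 < 1 -> p2 < 1 -> 1 < g -> interior_cond p1 p2 g ->
  0 < beta_star_a p1 p2 g < 1 /\ 0 < beta_star_b p1 p2 g < 1.
Proof.
  intros Hp1 Hp2 Hg Hint. apply interior_cond_iff in Hint.
  destruct (K_plus_bounds p1 p2 g) as [B2 B1]; try lra.
  pose proof (point_of_K_in_open_square p1 p2 g _ Hg B2 B1) as H.
  rewrite <- beta_star_eq in H. exact H.
Qed.

Lemma beta_star_fixed (p1 p2 g : R) :
  p1 < 1 -> p2 < 1 -> 1 < g -> interior_cond p1 p2 g ->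
  fixed_point_eqs p1 p2 g (beta_star_a p1 p2 g, beta_star_b p1 p2 g).
Proof.
  intros Hp1 Hp2 Hg Hint. apply interior_cond_iff in Hint.
  destruct (K_plus_bounds p1 p2 g) as [B2 _]; try lra.
  rewrite beta_star_eq, point_of_K_fixed_iff by lra.
  rewrite resolvent_factor by lra. ring.
Qed.

Lemma off_diagonal_fixed_point (p1 p2 g x y : R) :
  0 <= p1 < 1 -> 0 <= p2 < 1 -> ~ (p1 = 0 /\ p2 = 0) -> 1 < g ->
  0 <= x <= 1 -> 0 <= y <= 1 -> x <> y -> fixed_point_eqs p1 p2 g (x, y) ->
  interior_cond p1 p2 g /\ (x, y) = (beta_star_a p1 p2 g, beta_star_b p1 p2 g).
Proof.
  intros Hp1 Hp2 Hp Hg Hx Hy Hxy E.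
  pose proof (fixed_point_eqs_off_diag p1 p2 g x y Hxy E) as Hbal.
  destruct (balance_interior p1 p2 g x y) as (H1 & H2 & H12 & H21); try tauto; try lra.
  split; [apply interior_cond_iff; auto |].
  destruct (balance_point_of_K p1 p2 g x y H2 Hg Hx Hbal) as (K & HK & Exy).
  rewrite beta_star_eq, Exy. f_equal.
  rewrite Exy, point_of_K_fixed_iff in E by lra.
  apply resolvent_root_unique; lra.
Qed.

Theorem proposition4 (p1 p2 gamma : R)
  (hp1 : 0 <= p1 < 1) (hp2 : 0 <= p2 < 1) (hp : ~ (p1 = 0 /\ p2 = 0))
  (hgamma : 1 < gamma) :
  (interior_cond p1 p2 gamma ->
     0 < beta_star_a p1 p2 gamma < 1 /\ 0 < beta_star_b p1 p2 gamma < 1) /\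
  (forall beta : R * R, in_unit_square beta ->
     (F p1 p2 gamma beta = beta <->
       (beta = (0, 0) \/ beta = (1, 1) \/
        (interior_cond p1 p2 gamma /\
         beta = (beta_star_a p1 p2 gamma, beta_star_b p1 p2 gamma))))).
Proof.
  split; [apply beta_star_in_open_square; lra |].
  intros beta Hbeta.
  rewrite F_fixed_iff by (auto; lra).
  split.
  - destruct beta as [x y], Hbeta as [Hx Hy]. simpl in Hx, Hy.
    intro E. destruct (Req_dec x y) as [<- | Hxy].
    + destruct (fixed_point_eqs_diag p1 p2 gamma x) as [-> | ->]; auto; lra.
    + right; right. now apply off_diagonal_fixed_point.
  - intros [-> | [-> | [Hc ->]]]; [split; ring | split; ring |].
    now apply beta_star_fixed.
Qed.
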